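(* Let $m\geq 1$ be an integer. For all integers $n\geq 1$ and all real $x\in(0,\pi)$, $$\sum_{k=0}^n \binom{n-k+m}{m}\cos\bigl((k+1/2)x\bigr)>\begin{cases}-1/4, & m=1,\\ 0, & m\geq 2,\end{cases}$$ and $$\sum_{k=0}^n \binom{n-k+m}{m}\sin\bigl((k+1/2)x\bigr)>0.$$ All these lower bounds are sharp (the best possible constants valid for all $n\ge 1$, $x\in(0,\pi)$, for each fixed $m$ in the respective case). *)

From Stdlib Require Import Reals.
Open Scope R_scope.

Fixpoint binom (n k : nat) : nat :=
  match n, k with
  | _, O => 1%nat
  | O, S _ => 0%nat
  | S n', S k' => (binom n' k' + binom n' k)%nat
  end.

Definition cosBinSum (m n : nat) (x : R) : R :=
  sum_f_R0 (fun k => INR (binom (n - k + m) m) * cos ((INR k + / 2) * x)) n.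

Definition sinBinSum (m n : nat) (x : R) : R :=
  sum_f_R0 (fun k => INR (binom (n - k + m) m) * sin ((INR k + / 2) * x)) n.

Definition cosLowerBound (m : nat) : R := if Nat.eqb m 1 then - / 4 else 0.

(* For g : nat -> R write  T_m g n = sum_{k=0}^n binom(n-k+m, m) g(k),  so that
   cosBinSum m n x and sinBinSum m n x are T_m applied to k |-> cos((k+1/2)x)
   and k |-> sin((k+1/2)x).  Pascal's rule gives the recurrence
       T_{m+1} g (n+1) = T_{m+1} g n + T_m g (n+1),   T_m g 0 = g 0,
   hence: if every T_m g j is >= 0 then T_{m+1} g n >= g 0 for all n.  So a
   nonnegativity (resp. positivity) statement at one order propagates to all
   higher orders.  The base cases come from telescoping closed forms obtained
   by multiplying by powers of 2 sin(x/2):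
       2 sin(x/2)   T_0 sin  = 1 - cos((n+1)x)                   (>= 0),
       4 sin²(x/2)  T_1 cos  = cos(x/2) - cos((n+3/2)x)          (> -sin²(x/2)),
       8 sin³(x/2)  T_2 cos  = (n+2) sin x - sin((n+2)x)         (> 0).
   Sharpness: with n = 1 and x -> 0 (sine) or x -> PI (cosine, m >= 2) the sums
   tend to 0; for m = 1 the choice n = 2j-1, x = 4 PI j/(4j+1) makes
   cos((n+3/2)x) = 1, so T_1 cos = -1/(4(1 + cos(x/2))) with cos(x/2) -> 0.
   The file proves, in order: binomial facts, the recurrence and the
   propagation lemmas, the trigonometric identities and closed forms, the
   lower bounds, the sharpness constructions, and finally the theorem. *)

From Stdlib Require Import Reals Ratan Lra Psatz Lia.
Open Scope R_scope.

Lemma binom_0_r n : binom n 0 = 1%nat.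
Proof. destruct n; reflexivity. Qed.

Lemma binom_small n k : (n < k)%nat -> binom n k = 0%nat.
Proof.
  revert k; induction n as [|n IH]; intros [|k] Hk; simpl; try lia.
  rewrite !IH; lia.
Qed.

Lemma binom_diag n : binom n n = 1%nat.
Proof. induction n as [|n IH]; simpl; [reflexivity|]. rewrite IH, binom_small; lia. Qed.

Definition binomSum (g : nat -> R) (m n : nat) : R :=
  sum_f_R0 (fun k => INR (binom (n - k + m) m) * g k) n.

Lemma binomSum_n0 g m : binomSum g m 0 = g 0%nat.
Proof. unfold binomSum; simpl. rewrite binom_diag. simpl; ring. Qed.

Lemma binomSum_order0 g n : binomSum g 0 n = sum_f_R0 g n.
Proof. apply sum_eq; intros. rewrite binom_0_r. simpl; ring. Qed.

Lemma binomSum_pascal g m n :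
  binomSum g (S m) (S n) = binomSum g (S m) n + binomSum g m (S n).
Proof.
  unfold binomSum. rewrite !tech5, Nat.sub_diag, !binom_diag.
  rewrite <- Rplus_assoc, <- plus_sum. f_equal. apply sum_eq; intros k Hk.
  replace (S n - k + S m)%nat with (S (S n - k + m)) by lia.
  replace (n - k + S m)%nat with (S n - k + m)%nat by lia.
  simpl binom. rewrite plus_INR; ring.
Qed.

(* If all sums of order m are nonnegative, the sums of order m+1 increase in n
   and are therefore bounded below by their first term g 0. *)
Lemma binomSum_lift_ge g m :
  (forall j, 0 <= binomSum g m j) -> forall n, g 0%nat <= binomSum g (S m) n.
Proof.
  intros Hm n; induction n as [|n IH].
  - rewrite binomSum_n0; lra.
  - rewrite binomSum_pascal. specialize (Hm (S n)). lra.
Qed.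

Lemma binomSum_nonneg_all g :
  (forall j, 0 <= binomSum g 0 j) -> forall m n, 0 <= binomSum g m n.
Proof.
  intros H0 m; induction m as [|m IH]; [exact H0|]. intro n.
  assert (0 <= g 0%nat) by (rewrite <- (binomSum_n0 g 0); apply H0).
  pose proof (binomSum_lift_ge g m IH n). lra.
Qed.

Lemma binomSum_pos_above g m :
  (forall j, 0 < binomSum g m j) -> forall m' n, (m <= m')%nat -> 0 < binomSum g m' n.
Proof.
  intros Hm m' n Hle; revert n. induction Hle as [|m' _ IH]; [exact Hm|]. intro n.
  assert (0 < g 0%nat) by (rewrite <- (binomSum_n0 g m'); apply IH).
  assert (forall j, 0 <= binomSum g m' j) by (intro j; apply Rlt_le, IH).
  pose proof (binomSum_lift_ge g m' H0 n). lra.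
Qed.

Lemma prod_sin_cos a b : 2 * sin b * cos a = sin (a + b) - sin (a - b).
Proof. rewrite sin_plus, sin_minus. ring. Qed.

Lemma prod_sin_sin a b : 2 * sin b * sin a = cos (a - b) - cos (a + b).
Proof. rewrite cos_plus, cos_minus. ring. Qed.

Lemma sin_by_half x : sin x = 2 * sin (x / 2) * cos (x / 2).
Proof. rewrite <- sin_2a. f_equal; field. Qed.

Lemma cos_by_half x : cos x = 1 - 2 * sin (x / 2) ^ 2.
Proof. replace x with (2 * (x / 2)) at 1 by field. rewrite cos_2a_sin. ring. Qed.

Lemma Rabs_cos_le_1 x : Rabs (cos x) <= 1.
Proof. apply Rabs_le, COS_bound. Qed.

Lemma Rabs_sin_mult_le x N : Rabs (sin (INR N * x)) <= INR N * Rabs (sin x).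
Proof.
  induction N as [|N IH].
  - simpl. rewrite Rmult_0_l, sin_0, Rabs_R0. lra.
  - rewrite S_INR, Rmult_plus_distr_r, Rmult_1_l, sin_plus.
    eapply Rle_trans; [apply Rabs_triang|]. rewrite !Rabs_mult.
    pose proof (Rabs_cos_le_1 x). pose proof (Rabs_cos_le_1 (INR N * x)).
    pose proof (Rabs_pos (sin (INR N * x))). pose proof (Rabs_pos (sin x)).
    assert (Rabs (sin (INR N * x)) * Rabs (cos x) <= Rabs (sin (INR N * x))) by nra.
    assert (Rabs (cos (INR N * x)) * Rabs (sin x) <= Rabs (sin x)) by nra.
    lra.
Qed.

Lemma sin_mult_lt x N :
  0 < sin x -> Rabs (cos x) < 1 -> (2 <= N)%nat -> sin (INR N * x) < INR N * sin x.
Proof.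
  intros Hs Hc HN. destruct N as [|N]; [lia|].
  rewrite S_INR, Rmult_plus_distr_r, Rmult_1_l, sin_plus.
  pose proof (Rabs_sin_mult_le x N) as HsinN.
  rewrite (Rabs_right (sin x)) in HsinN by lra.
  assert (1 <= INR N) by (apply (le_INR 1); lia).
  pose proof (COS_bound (INR N * x)).
  pose proof (Rle_abs (sin (INR N * x) * cos x)) as Hprod. rewrite Rabs_mult in Hprod.
  pose proof (Rabs_pos (cos x)).
  assert (Rabs (sin (INR N * x)) * Rabs (cos x) < INR N * sin x).
  { assert (0 < INR N * sin x) by nra.
    apply Rle_lt_trans with (INR N * sin x * Rabs (cos x)); nra. }
  nra.
Qed.

Definition cosTerm (x : R) (k : nat) : R := cos ((INR k + / 2) * x).
Definition sinTerm (x : R) (k : nat) : R := sin ((INR k + / 2) * x).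

Lemma cos_order0 x n :
  2 * sin (x / 2) * binomSum (cosTerm x) 0 n = sin ((INR n + 1) * x).
Proof.
  rewrite binomSum_order0. induction n as [|n IH]; unfold cosTerm in *.
  - simpl. replace ((0 + / 2) * x) with (x / 2) by field.
    replace ((0 + 1) * x) with x by ring. rewrite (sin_by_half x). ring.
  - rewrite tech5, Rmult_plus_distr_l, IH, prod_sin_cos, S_INR.
    replace ((INR n + 1 + / 2) * x + x / 2) with ((INR n + 1 + 1) * x) by field.
    replace ((INR n + 1 + / 2) * x - x / 2) with ((INR n + 1) * x) by field. ring.
Qed.

Lemma sin_order0 x n :
  2 * sin (x / 2) * binomSum (sinTerm x) 0 n = 1 - cos ((INR n + 1) * x).
Proof.
  rewrite binomSum_order0. induction n as [|n IH]; unfold sinTerm in *.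
  - simpl. rewrite (cos_by_half ((0 + 1) * x)).
    replace ((0 + / 2) * x) with (x / 2) by field.
    replace ((0 + 1) * x / 2) with (x / 2) by field. ring.
  - rewrite tech5, Rmult_plus_distr_l, IH, prod_sin_sin, S_INR.
    replace ((INR n + 1 + / 2) * x + x / 2) with ((INR n + 1 + 1) * x) by field.
    replace ((INR n + 1 + / 2) * x - x / 2) with ((INR n + 1) * x) by field. ring.
Qed.

Lemma cos_order1 x n :
  4 * sin (x / 2) ^ 2 * binomSum (cosTerm x) 1 n = cos (x / 2) - cos ((INR n + 3 / 2) * x).
Proof.
  induction n as [|n IH].
  - rewrite binomSum_n0. unfold cosTerm. simpl INR.
    replace ((0 + / 2) * x) with (x / 2) by field.
    replace (4 * sin (x / 2) ^ 2 * cos (x / 2)) with (2 * sin (x / 2) * sin x)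
      by (rewrite (sin_by_half x); ring).
    rewrite prod_sin_sin. f_equal; f_equal; field.
  - rewrite binomSum_pascal, Rmult_plus_distr_l, IH.
    replace (4 * sin (x / 2) ^ 2 * binomSum (cosTerm x) 0 (S n))
      with (2 * sin (x / 2) * (2 * sin (x / 2) * binomSum (cosTerm x) 0 (S n))) by ring.
    rewrite cos_order0, prod_sin_sin, S_INR.
    replace ((INR n + 1 + 1) * x - x / 2) with ((INR n + 3 / 2) * x) by field.
    replace ((INR n + 1 + 1) * x + x / 2) with ((INR n + 1 + 3 / 2) * x) by field. ring.
Qed.

Lemma cos_order2 x n :
  8 * sin (x / 2) ^ 3 * binomSum (cosTerm x) 2 n = (INR n + 2) * sin x - sin ((INR n + 2) * x).
Proof.
  induction n as [|n IH].
  - rewrite binomSum_n0. unfold cosTerm. simpl INR.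
    replace ((0 + / 2) * x) with (x / 2) by field.
    replace ((0 + 2) * x) with (2 * x) by ring.
    rewrite sin_2a, (cos_by_half x), (sin_by_half x). ring.
  - rewrite binomSum_pascal, Rmult_plus_distr_l, IH.
    replace (8 * sin (x / 2) ^ 3 * binomSum (cosTerm x) 1 (S n))
      with (2 * sin (x / 2) * (4 * sin (x / 2) ^ 2 * binomSum (cosTerm x) 1 (S n))) by ring.
    rewrite cos_order1, Rmult_minus_distr_l, S_INR.
    replace (2 * sin (x / 2) * cos (x / 2)) with (sin x) by (rewrite (sin_by_half x); ring).
    rewrite prod_sin_cos.
    replace ((INR n + 1 + 3 / 2) * x + x / 2) with ((INR n + 1 + 2) * x) by field.
    replace ((INR n + 1 + 3 / 2) * x - x / 2) with ((INR n + 2) * x) by field. ring.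
Qed.

Lemma half_angle_facts x :
  0 < x < PI -> 0 < sin (x / 2) /\ 0 < cos (x / 2) /\ sin (x / 2) ^ 2 + cos (x / 2) ^ 2 = 1.
Proof.
  intros Hx. split; [apply sin_gt_0; lra|]. split; [apply cos_gt_0; lra|].
  pose proof (sin2_cos2 (x / 2)). unfold Rsqr in H. lra.
Qed.

Lemma sin_sum_pos x m n : 0 < x < PI -> (1 <= m)%nat -> 0 < binomSum (sinTerm x) m n.
Proof.
  intros Hx Hm. destruct (half_angle_facts x Hx) as (Hs & _ & _).
  assert (Hall : forall m j, 0 <= binomSum (sinTerm x) m j).
  { apply binomSum_nonneg_all. intro j.
    pose proof (sin_order0 x j). pose proof (COS_bound ((INR j + 1) * x)). nra. }
  destruct m as [|m]; [lia|].
  assert (sinTerm x 0 = sin (x / 2)) by (unfold sinTerm; f_equal; simpl; field).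
  pose proof (binomSum_lift_ge (sinTerm x) m (Hall m) n). lra.
Qed.

Lemma cos_sum_order1_gt x n : 0 < x < PI -> binomSum (cosTerm x) 1 n > - / 4.
Proof.
  intros Hx. destruct (half_angle_facts x Hx) as (Hs & Hc & Hsc).
  pose proof (cos_order1 x n). pose proof (COS_bound ((INR n + 3 / 2) * x)).
  assert (0 < sin (x / 2) ^ 2) by nra.
  assert (sin (x / 2) ^ 2 * (4 * binomSum (cosTerm x) 1 n + 1) > 0) by nra.
  nra.
Qed.

Lemma cos_sum_order2_pos x : 0 < x < PI -> forall n, 0 < binomSum (cosTerm x) 2 n.
Proof.
  intros Hx n. destruct (half_angle_facts x Hx) as (Hs & Hc & Hsc).
  pose proof (cos_order2 x n).
  assert (0 < sin x) by (apply sin_gt_0; lra).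
  assert (Rabs (cos x) < 1) by (rewrite (cos_by_half x); apply Rabs_def1; nra).
  pose proof (sin_mult_lt x (n + 2) H0 H1 ltac:(lia)).
  rewrite plus_INR in H2. replace (INR 2) with 2 in H2 by (simpl; ring).
  assert (0 < sin (x / 2) ^ 3) by (apply pow_lt; lra).
  nra.
Qed.

Lemma small_step eps c : 0 < eps -> 0 <= c -> exists d, 0 < d <= 1 / 2 /\ c * d < eps.
Proof.
  intros He Hc. exists (Rmin (1 / 2) (eps / (c + 1))).
  assert (0 < eps / (c + 1)) by (apply Rdiv_lt_0_compat; lra).
  pose proof (Rmin_l (1 / 2) (eps / (c + 1))). pose proof (Rmin_r (1 / 2) (eps / (c + 1))).
  split; [split; [apply Rmin_glb_lt|]; lra|].
  apply Rle_lt_trans with (c * (eps / (c + 1))); [apply Rmult_le_compat_l; lra|].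
  apply (Rmult_lt_reg_r (c + 1)); [lra|]. unfold Rdiv.
  replace (c * (eps * / (c + 1)) * (c + 1)) with (c * eps) by (field; lra). nra.
Qed.

Lemma sum_at_n1 (f : R -> R) m x :
  sum_f_R0 (fun k => INR (binom (1 - k + m) m) * f ((INR k + / 2) * x)) 1
  = INR (binom (S m) m) * f (x / 2) + f (3 * x / 2).
Proof.
  rewrite tech5. cbn [sum_f_R0].
  replace (1 - 1 + m)%nat with m by lia. replace (1 - 0 + m)%nat with (S m) by lia.
  rewrite binom_diag, INR_0, INR_1.
  replace ((0 + / 2) * x) with (x / 2) by field.
  replace ((1 + / 2) * x) with (3 * x / 2) by field. ring.
Qed.

(* Near x = 0 the sine sum with n = 1 is O(x). *)
Lemma sin_sum_sharp m eps : eps > 0 -> exists x, 0 < x < PI /\ sinBinSum m 1 x < eps.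
Proof.
  intros He. set (B := INR (binom (S m) m)).
  assert (0 <= B) by apply pos_INR.
  destruct (small_step eps (B / 2 + 3 / 2) He ltac:(lra)) as (x & Hx & Hsmall).
  exists x. pose proof PI2_3_2. split; [lra|].
  unfold sinBinSum. rewrite (sum_at_n1 sin). fold B.
  pose proof (sin_lt_x (x / 2) ltac:(lra)). pose proof (sin_lt_x (3 * x / 2) ltac:(lra)).
  nra.
Qed.

(* Near x = PI the cosine sum with n = 1 is O(PI - x). *)
Lemma cos_sum_sharp_at_PI m eps : eps > 0 -> exists x, 0 < x < PI /\ cosBinSum m 1 x < eps.
Proof.
  intros He. set (B := INR (binom (S m) m)).
  assert (0 <= B) by apply pos_INR.
  destruct (small_step eps (B / 2) He ltac:(lra)) as (d & Hd & Hsmall).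
  exists (PI - d). pose proof PI2_3_2. split; [lra|].
  unfold cosBinSum. rewrite (sum_at_n1 cos). fold B.
  replace ((PI - d) / 2) with (PI / 2 - d / 2) by field. rewrite cos_shift.
  replace (3 * (PI - d) / 2) with (PI / 2 - 3 * d / 2 + PI) by field.
  rewrite neg_cos, cos_shift.
  pose proof (sin_lt_x (d / 2) ltac:(lra)).
  pose proof (sin_ge_0 (3 * d / 2) ltac:(lra) ltac:(lra)).
  nra.
Qed.

Lemma cos_sum_order1_at_peak x n :
  0 < x < PI -> cos ((INR n + 3 / 2) * x) = 1 ->
  binomSum (cosTerm x) 1 n = - / (4 * (1 + cos (x / 2))).
Proof.
  intros Hx Hpeak. destruct (half_angle_facts x Hx) as (Hs & Hc & Hsc).
  pose proof (cos_order1 x n) as Hform. rewrite Hpeak in Hform.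
  assert (0 < sin (x / 2) ^ 2) by nra.
  apply (Rmult_eq_reg_l (4 * sin (x / 2) ^ 2)); [|lra]. rewrite Hform.
  replace (sin (x / 2) ^ 2) with ((1 - cos (x / 2)) * (1 + cos (x / 2))) by nra.
  field. lra.
Qed.

(* The points x_j = 4 PI j/(4j+1) are peaks for n = 2j-1, i.e.
   (n + 3/2) x_j = 2 PI j, and their half angle is within PI/(8j+2) of PI/2,
   so that cos(x_j/2) = O(1/j). *)
Lemma order1_peak_points j :
  (1 <= j)%nat -> exists x, (0 < x < PI) /\
    cos ((INR (2 * j - 1) + 3 / 2) * x) = 1 /\ cos (x / 2) * INR j < 1.
Proof.
  intros Hj. set (J := INR j).
  assert (HJ : 1 <= J) by (apply (le_INR 1); lia).
  pose proof PI_RGT_0 as Hpi. pose proof PI_4 as Hpi4.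
  set (x := 4 * PI * J / (4 * J + 1)).
  assert (Hx : 0 < x < PI).
  { unfold x. split; [apply Rdiv_lt_0_compat; nra|].
    apply (Rmult_lt_reg_r (4 * J + 1)); [lra|]. unfold Rdiv.
    rewrite Rmult_assoc, Rinv_l; nra. }
  exists x. split; [exact Hx|]. split.
  - rewrite minus_INR, mult_INR, INR_1 by lia. fold J. simpl (INR 2).
    replace ((1 + 1) * J - 1 + 3 / 2) with (2 * J + / 2) by field.
    replace ((2 * J + / 2) * x) with (0 + 2 * J * PI) by (unfold x; field; lra).
    unfold J. rewrite cos_period. apply cos_0.
  - set (a := PI / (2 * (4 * J + 1))).
    assert (Hhalf : cos (x / 2) = sin a).
    { rewrite <- cos_shift. f_equal. unfold x, a. field. lra. }
    assert (Ha : 0 < a) by (apply Rdiv_lt_0_compat; lra).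
    assert (Hsmall : a * J <= 1 / 2).
    { apply (Rmult_le_reg_r (2 * (4 * J + 1))); [lra|].
      replace (a * J * (2 * (4 * J + 1))) with (PI * J) by (unfold a; field; lra).
      nra. }
    pose proof (sin_lt_x a Ha). rewrite Hhalf. nra.
Qed.

Lemma peak_value_close c eps : 0 < c < eps -> - / (4 * (1 + c)) < - / 4 + eps.
Proof.
  intros Hc. apply Rplus_lt_reg_r with (/ (4 * (1 + c))).
  replace (- / (4 * (1 + c)) + / (4 * (1 + c))) with 0 by ring.
  replace (- / 4 + eps + / (4 * (1 + c))) with (eps - c / (4 * (1 + c))) by (field; lra).
  assert (c / (4 * (1 + c)) < c).
  { apply (Rmult_lt_reg_r (4 * (1 + c))); [lra|].
    replace (c / (4 * (1 + c)) * (4 * (1 + c))) with c by (field; lra). nra. }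
  lra.
Qed.

Lemma cos_sum_order1_sharp eps :
  eps > 0 -> exists n x, (1 <= n)%nat /\ 0 < x < PI /\ binomSum (cosTerm x) 1 n < - / 4 + eps.
Proof.
  intros He. destruct (archimed_cor1 eps He) as [j [Hj Hj0]].
  destruct (order1_peak_points j ltac:(lia)) as (x & Hx & Hpeak & Hc).
  exists (2 * j - 1)%nat, x. split; [lia|]. split; [exact Hx|].
  rewrite (cos_sum_order1_at_peak x _ Hx Hpeak). apply peak_value_close.
  destruct (half_angle_facts x Hx) as (_ & Hc0 & _). split; [exact Hc0|].
  assert (1 < INR j * eps).
  { assert (0 < INR j) by (apply lt_0_INR; lia).
    apply (Rmult_lt_compat_l (INR j)) in Hj; [|lra]. rewrite Rinv_r in Hj; lra. }
  nra.
Qed.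

Theorem theorem2 (m : nat) (hm : (1 <= m)%nat) :
  (* the inequalities *)
  (forall (n : nat) (x : R), (1 <= n)%nat -> 0 < x < PI ->
     cosBinSum m n x > cosLowerBound m /\ sinBinSum m n x > 0)
  /\
  (* sharpness of the cosine bound *)
  (forall eps : R, eps > 0 ->
     exists (n : nat) (x : R), (1 <= n)%nat /\ 0 < x < PI /\
       cosBinSum m n x < cosLowerBound m + eps)
  /\
  (* sharpness of the sine bound *)
  (forall eps : R, eps > 0 ->
     exists (n : nat) (x : R), (1 <= n)%nat /\ 0 < x < PI /\
       sinBinSum m n x < eps).
Proof.
  unfold cosLowerBound. split; [|split].
  - intros n x _ Hx. split; [|exact (sin_sum_pos x m n Hx hm)].
    destruct (Nat.eqb_spec m 1) as [->|Hm1].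
    + exact (cos_sum_order1_gt x n Hx).
    + apply (binomSum_pos_above (cosTerm x) 2); [exact (cos_sum_order2_pos x Hx)|lia].
  - intros eps He. destruct (Nat.eqb_spec m 1) as [->|Hm1].
    + exact (cos_sum_order1_sharp eps He).
    + destruct (cos_sum_sharp_at_PI m eps He) as (x & Hx & Hsum).
      exists 1%nat, x. split; [lia|]. split; [exact Hx|lra].
  - intros eps He. destruct (sin_sum_sharp m eps He) as (x & Hx & Hsum).
    exists 1%nat, x. split; [lia|]. split; [exact Hx|exact Hsum].
Qed.
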